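(* (i) Suppose that $\rho$ is an NPT (non-positive partial transpose) bipartite state. For every vector $\ket{y}$ in the negative eigenspace of $\rho^\Gamma$ (the partial transpose of $\rho$ with respect to the first subsystem), let $\ket{y}\in\mathbb{C}^{m(y)}\otimes\mathbb{C}^{n(y)}$, i.e. $m(y)$ and $n(y)$ are the local dimensions of the space supporting $\ket{y}$, and denote $p=\min_{\ket{y}}\{m(y),n(y)\}$, the minimum taken over all $\ket{y}$ in the negative eigenspace of $\rho^\Gamma$. Then $\rho$ can be locally projected (by a product operator) to an NPT state supported on $\mathbb{C}^{p}\otimes\mathbb{C}^{p}$. (ii) Suppose that $W$ is a bipartite entanglement witness. For every vector $\ket{y}$ in the negative eigenspace of $W$, let $\ket{y}\in\mathbb{C}^{m(y)}\otimes\mathbb{C}^{n(y)}$, i.e. $m(y)$ and $n(y)$ are the local dimensions of the space supporting $\ket{y}$, and denote $p=\min_{\ket{y}}\{m(y),n(y)\}$, the minimum taken over all $\ket{y}$ in the negative eigenspace of $W$. Then $W$ can be locally projected (by a product operator) to an entanglement witness supported on $\mathbb{C}^{p}\otimes\mathbb{C}^{p}$.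
   Context: Bipartite quantum systems over the complex field. An entanglement witness (EW) is a Hermitian $W$ with $\mathrm{tr}(W\rho)\geq 0$ for all separable states $\rho$ and $\mathrm{tr}(W\sigma)<0$ for at least one entangled state $\sigma$. $M^\Gamma$ denotes the partial transpose of a bipartite matrix $M$ with respect to the first subsystem; a state $\rho$ is NPT if $\rho^\Gamma$ is not positive semidefinite. ''Locally projecting'' means applying a product operator $X=U\otimes V$ (e.g. a local unitary followed by a product projector $P=I_p\otimes I_p$) as $X M X^\dagger$. *)

(* Bipartite systems C^m (x) C^n over an arbitrary
   numClosedFieldType C (e.g. the complex numbers R[i]); bipartite index
   (i,j) <-> i*n+j via mathcomp-real-closed's mxtens_index, tensor product
   of matrices A *t B (Kronecker product, same convention). *)
From HB Require Import structures.
From mathcomp Require Import all_boot all_order all_algebra.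
From mathcomp Require Import mxtens.
Set Implicit Arguments.
Unset Strict Implicit.
Unset Printing Implicit Defensive.
Import Order.TTheory GRing.Theory Num.Theory.
Local Open Scope ring_scope.

Section Defs.
Variable C : numClosedFieldType.

Definition adjmx {k l : nat} (M : 'M[C]_(k, l)) : 'M[C]_(l, k) :=
  (map_mx Num.conj M)^T.

Definition hermitian {N : nat} (M : 'M[C]_N) : Prop := adjmx M = M.

Definition psd {N : nat} (M : 'M[C]_N) : Prop :=
  hermitian M /\ forall v : 'cV[C]_N, 0 <= (adjmx v *m M *m v) 0 0.

Definition is_state {N : nat} (M : 'M[C]_N) : Prop := psd M /\ \tr M = 1.

(* partial transpose w.r.t. the first subsystem:
   (M^Gamma)_{(i,j),(k,l)} = M_{(k,j),(i,l)} *)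
Definition ptrans (m n : nat) (M : 'M[C]_(m * n)) : 'M[C]_(m * n) :=
  \matrix_(a, b)
    M (mxtens_index ((mxtens_unindex b).1, (mxtens_unindex a).2))
      (mxtens_index ((mxtens_unindex a).1, (mxtens_unindex b).2)).

Definition NPT (m n : nat) (M : 'M[C]_(m * n)) : Prop := ~ psd (@ptrans m n M).

(* separable state: a state which is a (convex, after normalisation) sum of
   product pure states |a_i><a_i| (x) |b_i><b_i| *)
Definition separable (m n : nat) (S : 'M[C]_(m * n)) : Prop :=
  is_state S /\
  exists (k : nat) (a : 'I_k -> 'cV[C]_m) (b : 'I_k -> 'cV[C]_n),
    S = \sum_(i < k) ((a i *t b i) *m adjmx (a i *t b i)).

Definition entangled (m n : nat) (S : 'M[C]_(m * n)) : Prop :=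
  is_state S /\ ~ @separable m n S.

Definition is_EW (m n : nat) (W : 'M[C]_(m * n)) : Prop :=
  hermitian W /\
  (forall S : 'M[C]_(m * n), @separable m n S -> 0 <= \tr (W *m S)) /\
  (exists S : 'M[C]_(m * n), @entangled m n S /\ \tr (W *m S) < 0).

Definition in_neg_eigenspace {N : nat} (H : 'M[C]_N) (y : 'cV[C]_N) : Prop :=
  exists (k : nat) (lam : 'I_k -> C) (v : 'I_k -> 'cV[C]_N),
    (forall i, lam i < 0 /\ H *m v i = lam i *: v i) /\
    y = \sum_(i < k) v i.

Definition coefmx (m n : nat) (y : 'cV[C]_(m * n)) : 'M[C]_(m, n) :=
  \matrix_(i, j) y (mxtens_index (i, j)) 0.

(* local dimensions m(y), n(y) of the (smallest product) space supporting y: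
   ranks of the two reduced density operators of |y><y| *)
Definition locdimA (m n : nat) (y : 'cV[C]_(m * n)) : nat :=
  \rank (@coefmx m n y *m adjmx (@coefmx m n y)).
Definition locdimB (m n : nat) (y : 'cV[C]_(m * n)) : nat :=
  \rank ((@coefmx m n y)^T *m map_mx Num.conj (@coefmx m n y)).

Definition is_min_negdim (m n : nat) (H : 'M[C]_(m * n)) (p : nat) : Prop :=
  (exists y, y != 0 /\ in_neg_eigenspace H y /\
     p = minn (@locdimA m n y) (@locdimB m n y)) /\
  (forall y, y != 0 -> in_neg_eigenspace H y ->
     (p <= minn (@locdimA m n y) (@locdimB m n y))%N).

End Defs.

Arguments ptrans {C} m n M.

Arguments NPT {C} m n M.
Arguments separable {C} m n S.
Arguments entangled {C} m n S.
Arguments is_EW {C} m n W.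
Arguments coefmx {C} m n y.
Arguments locdimA {C} m n y.
Arguments locdimB {C} m n y.
Arguments is_min_negdim {C} m n H p.

(* Pick a nonzero y in the negative eigenspace of H (H = rho^Gamma, resp. W)
   whose coefficient matrix Y has rank p, and factor Y = P Q through its rank,
   with P : m x p and Q : p x n.  Then y = (P (x) Q^T) z for the unnormalised
   maximally entangled vector z of C^p (x) C^p, so for X = adj(P) (x) adj(Q^T)
   the negative value <y|H|y> equals <z|X H adj(X)|z>.  Partial transposition
   commutes with local congruence up to conjugating the first factor, so
   projecting rho by conj(adj(P)) (x) adj(Q^T) yields an NPT state.  Being
   nonnegative on product vectors, which is equivalent to being nonnegative on
   separable states, survives local congruence, so X W adj(X) is again a
   witness. *)

From Pilot Require Import Defs.
From HB Require Import structures.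
From mathcomp Require Import all_boot all_order all_algebra.
From mathcomp Require Import mxtens.
Set Implicit Arguments.
Unset Strict Implicit.
Unset Printing Implicit Defensive.
Import Order.TTheory GRing.Theory Num.Theory.
Local Open Scope ring_scope.

Section Adjoint.
Variable C : numClosedFieldType.

Lemma adjmxE k l (A : 'M[C]_(k, l)) i j : adjmx A j i = (A i j)^*.
Proof. by rewrite /adjmx !mxE. Qed.

Lemma adjmxK k l (A : 'M[C]_(k, l)) : adjmx (adjmx A) = A.
Proof. by apply/matrixP=> i j; rewrite !adjmxE conjCK. Qed.

Lemma map_conj_mxK k l (A : 'M[C]_(k, l)) :
  map_mx Num.conj (map_mx Num.conj A) = A.
Proof. by apply/matrixP=> i j; rewrite !mxE conjCK. Qed.

Lemma adjmxM k l r (A : 'M[C]_(k, l)) (B : 'M[C]_(l, r)) :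
  adjmx (A *m B) = adjmx B *m adjmx A.
Proof. by rewrite /adjmx map_mxM trmx_mul. Qed.

Lemma adjmxD k l (A B : 'M[C]_(k, l)) : adjmx (A + B) = adjmx A + adjmx B.
Proof. by apply/matrixP=> i j; rewrite !(adjmxE, mxE) rmorphD. Qed.

Lemma adjmxZ k l c (A : 'M[C]_(k, l)) : adjmx (c *: A) = c^* *: adjmx A.
Proof. by apply/matrixP=> i j; rewrite !(adjmxE, mxE) rmorphM. Qed.

Lemma adjmx0 k l : adjmx (0 : 'M[C]_(k, l)) = 0.
Proof. by apply/matrixP=> i j; rewrite !(adjmxE, mxE) rmorph0. Qed.

Lemma adjmx_sum k l I (r : seq I) (P : pred I) (F : I -> 'M[C]_(k, l)) :
  adjmx (\sum_(i <- r | P i) F i) = \sum_(i <- r | P i) adjmx (F i).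
Proof. exact: (big_morph _ (@adjmxD k l) (@adjmx0 k l)). Qed.

Lemma adjmx_tens k l r s (A : 'M[C]_(k, l)) (B : 'M[C]_(r, s)) :
  adjmx (A *t B) = adjmx A *t adjmx B.
Proof. by rewrite /adjmx map_mxT trmx_tens. Qed.

Lemma adjmx_delta k (a : 'I_k) : adjmx (delta_mx a 0 : 'cV[C]_k) = delta_mx 0 a.
Proof.
by apply/matrixP=> i j; rewrite adjmxE !mxE; case: (_ == _); case: (_ == _);
  rewrite ?rmorph1 ?rmorph0.
Qed.

Definition cvdot k (u v : 'cV[C]_k) : C := (adjmx u *m v) 0 0.

Definition qform k (M : 'M[C]_k) (v : 'cV[C]_k) : C := (adjmx v *m M *m v) 0 0.

Lemma qformE k (M : 'M[C]_k) v : qform M v = cvdot v (M *m v).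
Proof. by rewrite /qform /cvdot mulmxA. Qed.

Lemma cvdotE k (u v : 'cV[C]_k) : cvdot u v = \sum_i (u i 0)^* * v i 0.
Proof. by rewrite /cvdot mxE; apply: eq_bigr=> i _; rewrite adjmxE. Qed.

Lemma qform_mx0 k (v : 'cV[C]_k) : qform 0 v = 0.
Proof. by rewrite /qform mulmx0 mul0mx mxE. Qed.

Lemma qform_vec0 k (M : 'M[C]_k) : qform M 0 = 0.
Proof. by rewrite /qform mulmx0 mxE. Qed.

Lemma cvdot_ge0 k (v : 'cV[C]_k) : 0 <= cvdot v v.
Proof.
by rewrite cvdotE; apply: sumr_ge0=> i _; rewrite mulrC mul_conjC_ge0.
Qed.

Lemma cvdot_eq0 k (v : 'cV[C]_k) : (cvdot v v == 0) = (v == 0).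
Proof.
apply/eqP/eqP=> [|->]; last by rewrite cvdotE big1 // => i _; rewrite mxE mulr0.
have ge0 i : 0 <= (v i 0)^* * v i 0 by rewrite mulrC mul_conjC_ge0.
rewrite cvdotE => /(psumr_eq0P (fun i _ => ge0 i)) v0.
apply/matrixP=> i j; rewrite ord1 mxE.
by apply/eqP; rewrite -mul_conjC_eq0 mulrC v0.
Qed.

Lemma cvdotDl k (u v w : 'cV[C]_k) : cvdot (u + v) w = cvdot u w + cvdot v w.
Proof. by rewrite /cvdot adjmxD mulmxDl mxE. Qed.

Lemma cvdotZl k c (u v : 'cV[C]_k) : cvdot (c *: u) v = c^* * cvdot u v.
Proof. by rewrite /cvdot adjmxZ -scalemxAl mxE. Qed.

Lemma cvdotZr k c (u v : 'cV[C]_k) : cvdot u (c *: v) = c * cvdot u v.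
Proof. by rewrite /cvdot -scalemxAr mxE. Qed.

Lemma cvdot_sum k (I J : finType) (u : I -> 'cV[C]_k) (v : J -> 'cV[C]_k) :
  cvdot (\sum_i u i) (\sum_j v j) = \sum_i \sum_j cvdot (u i) (v j).
Proof.
rewrite /cvdot adjmx_sum mulmx_suml summxE; apply: eq_bigr=> i _.
by rewrite mulmx_sumr summxE.
Qed.

Lemma cvdot_deltal k (a : 'I_k) (v : 'cV[C]_k) : cvdot (delta_mx a 0) v = v a 0.
Proof. by rewrite /cvdot adjmx_delta -rowE mxE. Qed.

Lemma qform_delta k (M : 'M[C]_k) a : qform M (delta_mx a 0) = M a a.
Proof. by rewrite qformE cvdot_deltal -colE mxE. Qed.

Lemma qform_congr k l (X : 'M[C]_(k, l)) (M : 'M[C]_l) (v : 'cV[C]_k) :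
  qform (X *m M *m adjmx X) v = qform M (adjmx X *m v).
Proof. by rewrite /qform adjmxM adjmxK !mulmxA. Qed.

Lemma qform_rank1 k (u v : 'cV[C]_k) :
  qform (u *m adjmx u) v = (cvdot u v)^* * cvdot u v.
Proof.
rewrite /qform /cvdot !mulmxA -(mulmxA _ _ v) [in LHS]mxE big_ord1.
by rewrite -adjmxE adjmxM adjmxK.
Qed.

Lemma mxtrace_rank1 k (u : 'cV[C]_k) : \tr (u *m adjmx u) = cvdot u u.
Proof. by rewrite mxtrace_mulC /mxtrace big_ord1. Qed.

Lemma mxtrace_mul_rank1 k (W : 'M[C]_k) (u : 'cV[C]_k) :
  \tr (W *m (u *m adjmx u)) = qform W u.
Proof. by rewrite mulmxA mxtrace_mulC /mxtrace big_ord1 mulmxA. Qed.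

Lemma mxrank_mul_adj k l (M : 'M[C]_(k, l)) : \rank (M *m adjmx M) = \rank M.
Proof.
rewrite -[RHS](mxrank_mul_ker M (adjmx M)); set S := (M :&: _)%MS.
suff -> : S = 0 by rewrite mxrank0 addn0.
apply/row_matrixP=> i; rewrite row0; set u := row i S.
have uS : (u <= S)%MS by apply: row_sub.
have /submxP [w uM] : (u <= M)%MS by apply: submx_trans uS (capmxSl _ _).
have /sub_kermxP uM0 : (u <= kermx (adjmx M))%MS.
  by apply: submx_trans uS (capmxSr _ _).
rewrite -[u]adjmxK; suff -> : adjmx u = 0 by rewrite adjmx0.
(* u = w M and u M^* = 0, hence u u^* = u M^* w^* = 0 *)
apply/eqP; rewrite -cvdot_eq0 /cvdot adjmxK.
by rewrite {2}uM adjmxM mulmxA uM0 mul0mx mxE.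
Qed.

End Adjoint.

Section PositiveSemidefinite.
Variable C : numClosedFieldType.

Lemma hermitian_congr k l (X : 'M[C]_(k, l)) (M : 'M[C]_l) :
  Defs.hermitian M -> Defs.hermitian (X *m M *m adjmx X).
Proof. by move=> Mh; rewrite /Defs.hermitian !adjmxM adjmxK Mh mulmxA. Qed.

Lemma psd_diag_ge0 k (M : 'M[C]_k) a : psd M -> 0 <= M a a.
Proof. by case=> _ Mge0; rewrite -qform_delta; apply: Mge0. Qed.

Lemma psd_diag0 k (M : 'M[C]_k) : psd M -> (forall a, M a a = 0) -> M = 0.
Proof.
move=> [Mh Mge0] M0; apply/matrixP=> a b; rewrite mxE.
have Mba : M b a = (M a b)^* by rewrite -{1}Mh adjmxE.
pose x : 'cV[C]_k := - M a b *: delta_mx a 0 + delta_mx b 0.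
have : 0 <= qform M x := Mge0 x.
rewrite qformE /x mulmxDr -scalemxAr -!colE cvdotDl cvdotZl !cvdot_deltal !mxE.
(* qform M x = - 2 |M a b|^2 *)
rewrite !M0 Mba rmorphN !mulr0 !add0r addr0 !mulNr [_^* * _]mulrC.
rewrite -opprD oppr_ge0.
have zz_ge0 : 0 <= M a b * (M a b)^* by apply: mul_conjC_ge0.
move=> zz2_le0; have /eqP : M a b * (M a b)^* + M a b * (M a b)^* = 0.
  by apply/le_anti; rewrite zz2_le0 addr_ge0.
by rewrite paddr_eq0 // andbb mul_conjC_eq0 => /eqP.
Qed.

Lemma psd_tr_ge0 k (M : 'M[C]_k) : psd M -> 0 <= \tr M.
Proof. by move=> Mpsd; apply: sumr_ge0 => a _; apply: psd_diag_ge0. Qed.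

Lemma psd_tr0 k (M : 'M[C]_k) : psd M -> \tr M = 0 -> M = 0.
Proof.
move=> Mpsd /(psumr_eq0P (fun a _ => psd_diag_ge0 a Mpsd)) M0.
by apply: psd_diag0 => // a; apply: M0.
Qed.

Lemma psd_congr k l (X : 'M[C]_(k, l)) (M : 'M[C]_l) :
  psd M -> psd (X *m M *m adjmx X).
Proof.
case=> Mh Mge0; split=> [|v]; first exact: hermitian_congr.
by rewrite -/(qform _ v) qform_congr; apply: Mge0.
Qed.

Lemma psd_rank1 k (u : 'cV[C]_k) : psd (u *m adjmx u).
Proof.
split=> [|v]; first by rewrite /Defs.hermitian adjmxM adjmxK.
by rewrite -/(qform _ v) qform_rank1 mulrC mul_conjC_ge0.
Qed.

Lemma psd_normalize k (M : 'M[C]_k) :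
  psd M -> \tr M != 0 -> is_state ((\tr M)^-1 *: M).
Proof.
move=> Mpsd tr_neq0; split; last by rewrite mxtraceZ mulVf.
have c_ge0 : 0 <= (\tr M)^-1 by rewrite invr_ge0 psd_tr_ge0.
case: Mpsd => Mh Mge0; split=> [|v].
  by rewrite /Defs.hermitian adjmxZ Mh conj_Creal ?ger0_real.
by rewrite -scalemxAr -scalemxAl mxE mulr_ge0.
Qed.

Lemma rank1_state k (u : 'cV[C]_k) :
  u != 0 -> is_state ((cvdot u u)^-1 *: (u *m adjmx u)).
Proof.
by move=> u_neq0; rewrite -mxtrace_rank1; apply: psd_normalize (psd_rank1 u) _;
  rewrite mxtrace_rank1 cvdot_eq0.
Qed.

End PositiveSemidefinite.

Lemma ptrans_is_linear (C : numClosedFieldType) m n :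
  linear (ptrans m n : 'M[C]_(m * n) -> 'M[C]_(m * n)).
Proof. by move=> c A B; apply/matrixP=> a b; rewrite !mxE. Qed.

HB.instance Definition _ (C : numClosedFieldType) m n :=
  GRing.isLinear.Build _ _ _ _ (ptrans m n)
    (@ptrans_is_linear C m n).

Section PartialTranspose.
Variable C : numClosedFieldType.

Lemma ptrans_tens m n (A : 'M[C]_m) (B : 'M[C]_n) :
  ptrans m n (A *t B) = A^T *t B.
Proof. by apply/matrixP=> a b; rewrite !mxE !mxtens_indexK. Qed.

Lemma delta_mx_tens m n (r t : 'I_m) (s u : 'I_n) :
  delta_mx (mxtens_index (r, s)) (mxtens_index (t, u)) =
  (delta_mx r t : 'M[C]_m) *t (delta_mx s u : 'M[C]_n).
Proof.
apply/matrixP=> a b.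
case: (mxtens_indexP a)=> i j; case: (mxtens_indexP b)=> k l.
rewrite tensmxE !mxE !(inj_eq (can_inj (@mxtens_indexK m n))) !xpair_eqE.
by case: (i == r); case: (j == s); case: (k == t); case: (l == u);
   rewrite ?mulr1 ?mulr0.
Qed.

Lemma ptrans_mulmx_tens m n p q (X : 'M[C]_(p, m)) (Y : 'M[C]_(q, n))
    (X' : 'M[C]_(m, p)) (Y' : 'M[C]_(n, q)) (M : 'M[C]_(m * n)) :
  ptrans p q ((X *t Y) *m M *m (X' *t Y')) =
  (X'^T *t Y) *m ptrans m n M *m (X^T *t Y').
Proof.
rewrite [M]matrix_sum_delta !(linear_sum, mulmx_suml, mulmx_sumr).
apply: eq_bigr=> a _; rewrite !(linear_sum, mulmx_suml, mulmx_sumr).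
apply: eq_bigr=> b _.
rewrite !linearZ /= -!scalemxAl !linearZ /=; congr (_ *: _).
case: (mxtens_indexP a)=> r s; case: (mxtens_indexP b)=> t u.
by rewrite delta_mx_tens !tensmx_mul !ptrans_tens !tensmx_mul !trmx_mul mulmxA.
Qed.

Lemma ptrans_congr m n p q (A : 'M[C]_(p, m)) (B : 'M[C]_(q, n))
    (M : 'M[C]_(m * n)) :
  ptrans p q ((A *t B) *m M *m adjmx (A *t B)) =
  (map_mx Num.conj A *t B) *m ptrans m n M *m adjmx (map_mx Num.conj A *t B).
Proof.
rewrite !adjmx_tens ptrans_mulmx_tens /adjmx trmxK.
by congr (_ *m _ *m (_ *t _)); apply/matrixP=> i j; rewrite !mxE ?conjCK.
Qed.

Lemma adjmx_ptrans m n (M : 'M[C]_(m * n)) :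
  adjmx (ptrans m n M) = ptrans m n (adjmx M).
Proof. by apply/matrixP=> a b; rewrite !(adjmxE, mxE). Qed.

Lemma hermitian_ptrans m n (M : 'M[C]_(m * n)) :
  Defs.hermitian M -> Defs.hermitian (ptrans m n M).
Proof. by rewrite /Defs.hermitian adjmx_ptrans => ->. Qed.

End PartialTranspose.

Section NegativeEigenspace.
Variables (C : numClosedFieldType) (N k : nat) (H : 'M[C]_N).
Variables (lam : 'I_k -> C) (v : 'I_k -> 'cV[C]_N).
Hypothesis H_herm : Defs.hermitian H.
Hypothesis lam_lt0 : forall i, lam i < 0.
Hypothesis Hv : forall i, H *m v i = lam i *: v i.

Lemma eigenvalue_eq_of_cvdot (i j : 'I_k) :
  cvdot (v i) (v j) != 0 -> lam i = lam j.
Proof.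
move=> vij_neq0; apply: (mulIf vij_neq0).
have lam_real : lam i \is Num.real by rewrite ltr0_real.
rewrite -{1}(conj_Creal lam_real) -cvdotZl -cvdotZr -!Hv.
by rewrite /cvdot adjmxM H_herm mulmxA.
Qed.

(* Eigenvectors for distinct real eigenvalues are orthogonal, so weighting
   each v i by sqrt(- lam i) turns <y|H|y> into minus a squared norm. *)
Let f i := sqrtC (- lam i).

Let f_gt0 i : 0 < f i. Proof. by rewrite sqrtC_gt0 oppr_gt0. Qed.

Let f_conj i : (f i)^* = f i.
Proof. exact/conj_Creal/gtr0_real/f_gt0. Qed.

Let f_cvdot (i j : 'I_k) : f i * cvdot (v i) (v j) = f j * cvdot (v i) (v j).
Proof.
by have [->|/eigenvalue_eq_of_cvdot lij] := eqVneq (cvdot (v i) (v j)) 0;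
  rewrite ?mulr0 // /f lij.
Qed.

Lemma qform_eigensum :
  qform H (\sum_i v i) = - cvdot (\sum_i f i *: v i) (\sum_i f i *: v i).
Proof.
rewrite qformE mulmx_sumr (eq_bigr _ (fun j _ => Hv j)) !cvdot_sum -sumrN.
apply: eq_bigr=> i _; rewrite -sumrN; apply: eq_bigr=> j _.
rewrite cvdotZl cvdotZr cvdotZr f_conj mulrA [f i * _]mulrC -mulrA f_cvdot.
by rewrite mulrA -expr2 sqrtCK /f mulNr opprK.
Qed.

Lemma cvdot_eigensum :
  cvdot (\sum_i v i) (\sum_i v i) =
  cvdot (\sum_i (f i)^-1 *: v i) (\sum_i f i *: v i).
Proof.
rewrite !cvdot_sum; apply: eq_bigr=> i _; apply: eq_bigr=> j _.
by rewrite cvdotZl cvdotZr fmorphV /= f_conj -f_cvdot mulKf ?gt_eqF.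
Qed.

Lemma qform_eigensum_lt0 : \sum_i v i != 0 -> qform H (\sum_i v i) < 0.
Proof.
move=> y_neq0; rewrite qform_eigensum oppr_lt0 lt_def cvdot_ge0 andbT cvdot_eq0.
apply: contra y_neq0 => /eqP w0.
by rewrite -cvdot_eq0 cvdot_eigensum w0 /cvdot mulmx0 mxE.
Qed.

End NegativeEigenspace.

Lemma qform_neg_eigenspace_lt0 (C : numClosedFieldType) N (H : 'M[C]_N) y :
  Defs.hermitian H -> in_neg_eigenspace H y -> y != 0 -> qform H y < 0.
Proof.
move=> H_herm [k [lam [v [Hv ->]]]].
exact: (qform_eigensum_lt0 H_herm (fun i => (Hv i).1) (fun i => (Hv i).2)).
Qed.

Lemma sum_mxtens_index (R : nmodType) m n (F : 'I_(m * n) -> R) :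
  \sum_b F b = \sum_(i < m) \sum_(j < n) F (mxtens_index (i, j)).
Proof.
rewrite pair_big /= (reindex (@mxtens_index m n)) /=.
  by apply: eq_bigr=> [[]].
by exists (@mxtens_unindex m n)=> i _; rewrite (mxtens_indexK, mxtens_unindexK).
Qed.

Section LocalFilter.
Variables (C : numClosedFieldType) (m n : nat).

Lemma locdim_min (y : 'cV[C]_(m * n)) :
  minn (locdimA m n y) (locdimB m n y) = \rank (coefmx m n y).
Proof.
rewrite /locdimA /locdimB.
have -> : map_mx Num.conj (coefmx m n y) = adjmx (coefmx m n y)^T.
  by rewrite /adjmx map_trmx trmxK.
by rewrite !mxrank_mul_adj mxrank_tr minnn.
Qed.

Definition maxent r : 'cV[C]_(r * r) :=
  \col_a ((@mxtens_unindex r r a).1 == (@mxtens_unindex r r a).2)%:R.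

Lemma maxentE r (i j : 'I_r) : maxent r (mxtens_index (i, j)) 0 = (i == j)%:R.
Proof. by rewrite mxE mxtens_indexK. Qed.

Definition lfilterA (y : 'cV[C]_(m * n)) : 'M_(\rank (coefmx m n y), m) :=
  adjmx (col_base (coefmx m n y)).

Definition lfilterB (y : 'cV[C]_(m * n)) : 'M_(\rank (coefmx m n y), n) :=
  adjmx (row_base (coefmx m n y))^T.

Lemma lfilter_maxent y :
  adjmx (lfilterA y *t lfilterB y) *m maxent (\rank (coefmx m n y)) = y.
Proof.
rewrite adjmx_tens /lfilterA /lfilterB !adjmxK; set Y := coefmx m n y.
apply/matrixP=> a b; rewrite [b]ord1; case: (mxtens_indexP a)=> i j.
have -> : y (mxtens_index (i, j)) 0 = (col_base Y *m row_base Y) i j.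
  by rewrite mulmx_base mxE.
rewrite [LHS]mxE sum_mxtens_index mxE; apply: eq_bigr=> k _.
rewrite (bigD1 k) //= big1 ?addr0 => [|l lk].
  by rewrite maxentE eqxx mulr1 tensmxE [_^T _ _]mxE.
by rewrite maxentE eq_sym (negbTE lk) mulr0.
Qed.

Lemma lfilter_qform_lt0 (H : 'M[C]_(m * n)) y :
  Defs.hermitian H -> in_neg_eigenspace H y -> y != 0 ->
  let X := lfilterA y *t lfilterB y in
  qform (X *m H *m adjmx X) (maxent _) < 0.
Proof.
by move=> H_herm Hy y_neq0; rewrite /= qform_congr lfilter_maxent;
  apply: qform_neg_eigenspace_lt0.
Qed.

End LocalFilter.

Section Witness.
Variable C : numClosedFieldType.

Definition block_positive m n (W : 'M[C]_(m * n)) : Prop :=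
  forall (a : 'cV[C]_m) (b : 'cV[C]_n), 0 <= qform W (a *t b).

Lemma tensmxZl k l r s c (A : 'M[C]_(k, l)) (B : 'M[C]_(r, s)) :
  (c *: A) *t B = c *: (A *t B).
Proof. by apply/matrixP=> i j; rewrite !mxE mulrA. Qed.

Lemma separable_product m n (a : 'cV[C]_m) (b : 'cV[C]_n) (u := a *t b) :
  u != 0 -> separable m n ((cvdot u u)^-1 *: (u *m adjmx u)).
Proof.
move=> u_neq0; split; first exact: rank1_state.
pose s := sqrtC (cvdot u u)^-1.
exists 1, (fun=> s *: a), (fun=> b); rewrite big_ord1.
have s_real : s \is Num.real.
  by rewrite ger0_real // sqrtC_ge0 invr_ge0 cvdot_ge0.
rewrite tensmxZl adjmxZ -scalemxAl -scalemxAr scalerA (conj_Creal s_real).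
by rewrite -expr2 sqrtCK.
Qed.

Lemma block_positive_of_sep_ge0 m n (W : 'M[C]_(m * n)) :
  (forall S, separable m n S -> 0 <= \tr (W *m S)) -> block_positive W.
Proof.
move=> W_sep a b; have [u0|u_neq0] := eqVneq (a *t b) 0.
  by rewrite u0 qform_vec0.
have := W_sep _ (separable_product u_neq0).
rewrite -scalemxAr mxtraceZ mxtrace_mul_rank1 pmulr_rge0 // invr_gt0.
by rewrite lt_def cvdot_ge0 cvdot_eq0 u_neq0.
Qed.

Lemma sep_ge0_of_block_positive m n (W : 'M[C]_(m * n)) S :
  block_positive W -> separable m n S -> 0 <= \tr (W *m S).
Proof.
move=> W_bp [_ [k [a [b ->]]]]; rewrite mulmx_sumr raddf_sum.
by apply: sumr_ge0 => i _ /=; rewrite mxtrace_mul_rank1.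
Qed.

Lemma block_positive_congr m n p q (A : 'M[C]_(p, m)) (B : 'M[C]_(q, n)) W :
  block_positive W -> block_positive ((A *t B) *m W *m adjmx (A *t B)).
Proof.
move=> W_bp a b; rewrite qform_congr adjmx_tens.
by have := W_bp (adjmx A *m a) (adjmx B *m b); rewrite -tensmx_mul.
Qed.

Lemma EW_of_qform_lt0 m n (W : 'M[C]_(m * n)) z :
  Defs.hermitian W -> block_positive W -> qform W z < 0 -> is_EW m n W.
Proof.
move=> W_herm W_bp Wz_lt0; split=> //; split=> [S|].
  exact: sep_ge0_of_block_positive.
have z_neq0 : z != 0.
  by apply: contraTneq Wz_lt0 => ->; rewrite qform_vec0 ltxx.
pose S := (cvdot z z)^-1 *: (z *m adjmx z).
have WS_lt0 : \tr (W *m S) < 0.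
  rewrite -scalemxAr mxtraceZ mxtrace_mul_rank1 pmulr_rlt0 // invr_gt0.
  by rewrite lt_def cvdot_ge0 cvdot_eq0 z_neq0.
exists S; split=> //; split; first exact: rank1_state.
by move/(sep_ge0_of_block_positive W_bp); rewrite lt_geF.
Qed.

Lemma state_NPT_of_qform_lt0 m n (sigma : 'M[C]_(m * n)) z :
  psd sigma -> qform (ptrans m n sigma) z < 0 ->
  is_state ((\tr sigma)^-1 *: sigma) /\ NPT m n sigma.
Proof.
move=> sigma_psd neg; split; last by case=> _ /(_ z); rewrite lt_geF.
apply: psd_normalize => //; apply: contraTneq neg => /(psd_tr0 sigma_psd) ->.
by rewrite linear0 qform_mx0 ltxx.
Qed.

End Witness.

Theorem lemma10 (C : numClosedFieldType) (m n : nat) :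
  (* (i) NPT states *)
  (forall (rho : 'M[C]_(m * n)) (p : nat),
     is_state rho -> NPT m n rho ->
     is_min_negdim m n (ptrans m n rho) p ->
     exists (A : 'M[C]_(p, m)) (B : 'M[C]_(p, n)),
       let sigma := (A *t B) *m rho *m adjmx (A *t B) in
       is_state ((\tr sigma)^-1 *: sigma) /\ NPT p p sigma) /\
  (* (ii) entanglement witnesses *)
  (forall (W : 'M[C]_(m * n)) (p : nat),
     is_EW m n W ->
     is_min_negdim m n W p ->
     exists (A : 'M[C]_(p, m)) (B : 'M[C]_(p, n)),
       is_EW p p ((A *t B) *m W *m adjmx (A *t B))).
Proof.
split.
- move=> rho _ [rho_psd _] _ [[y [y_neq0 [y_neg ->]]] _]; rewrite locdim_min.
  exists (map_mx Num.conj (lfilterA y)), (lfilterB y) => /=.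
  apply: state_NPT_of_qform_lt0; first exact: psd_congr.
  rewrite ptrans_congr map_conj_mxK.
  by apply: lfilter_qform_lt0 => //; apply: hermitian_ptrans; case: rho_psd.
- move=> W _ [W_herm [W_sep _]] [[y [y_neq0 [y_neg ->]]] _]; rewrite locdim_min.
  exists (lfilterA y), (lfilterB y).
  apply: EW_of_qform_lt0 (lfilter_qform_lt0 W_herm y_neg y_neq0).
    exact: hermitian_congr.
  exact/block_positive_congr/block_positive_of_sep_ge0.
Qed.
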